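(* Let $Z$ be a finite set with an abelian groupoid $\bigoplus_{\lambda\in\Lambda}G_\lambda$, let $X$ be a finite set, and let $\bar M: X\to Z$ be a $Z$-valued demolition measurement on $X$ (for this groupoid). For $\lambda\in\Lambda$ let $\bar M_\lambda := \rho_{G_\lambda}^\dagger\circ\bar M : X\to 1$. Then there exist an abelian groupoid $\bigoplus_{\gamma\in\Gamma} H_\gamma$ on $X$ and a function $f:\Gamma\to\Lambda$ such that for every $\lambda\in\Lambda$ $$\bar M_\lambda = \bigcup_{\gamma\in\Gamma,\ f(\gamma)=\lambda} D_\gamma,$$ where $D_\gamma := \rho_{H_\gamma}^\dagger\circ\mathrm{dec}_X : X\to 1$ and $\mathrm{dec}_X$ is the decoherence map of the groupoid $\bigoplus_\gamma H_\gamma$ on $X$.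
   Context: $\mathbf{fRel}$: finite sets and relations, relational composition, tensor the cartesian product with unit $1=\{\star\}$, dagger the converse relation. For a relation $g\subseteq X\times Y$, its pure CPM map is $\hat g = \{((x,x'),(y,y')) : (x,y)\in g,\ (x',y')\in g\}\subseteq (X\times X)\times(Y\times Y)$. A CPM map $X\to Y$ is a relation $R\subseteq (X\times X)\times(Y\times Y)$ of the form $\{((x,x'),(y,y')):\exists e\in E,\ (x,(e,y))\in h,\ (x',(e,y'))\in h\}$ for some finite $E$ and $h\subseteq X\times(E\times Y)$; CPM maps compose relationally, $\mathrm{id}_X=\widehat{\mathrm{id}_X}$, the dagger is the converse relation, and the tensor of $R:X\to Y$ and $S:U\to V$ is $\{(((x,u),(x',u')),((y,v),(y',v'))) : ((x,x'),(y,y'))\in R,\ ((u,u'),(v,v'))\in S\}$. The discarding map is $\cap_X = \{((x,x),\star): x\in X\}: X\to 1$; a CPM map $R:X\to Y$ is causal if $\cap_Y\circ R=\cap_X$. An abelian groupoid on a finite set $Z$ is a family of abelian groups $(G_\lambda,+,0_\lambda)_{\lambda\in\Lambda}$ with pairwise disjoint underlying sets covering $Z$. For it: comultiplication $\delta=\{(g,(g',g'')): g,g',g''\in G_\lambda\text{ for some }\lambda,\ g'+g''=g\}\subseteq Z\times(Z\times Z)$; pairing $e=\{((g,h),\star): g,h\in G_\lambda\text{ for some }\lambda,\ g+h=0_\lambda\}\subseteq (Z\times Z)\times 1$; decoherence map $\mathrm{dec}_Z=\{((x,x'),(y,y')) : \exists\lambda,\ x,x',y,y'\in G_\lambda,\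 x-y=x'-y'\}: Z\to Z$; and $\rho_{G_\lambda}=G_\lambda\times G_\lambda$, viewed as the pure CPM state $1\to Z$, with $\rho_{G_\lambda}^\dagger=\{((g,g'),\star):g,g'\in G_\lambda\}:Z\to 1$. A $Z$-valued non-demolition measurement on $X$ is a causal CPM map $M: X\to X\times Z$ of the form $M=(\mathrm{id}_X\times\mathrm{dec}_Z)\circ\hat P$ for some relation $P\subseteq X\times(X\times Z)$, satisfying (idempotence) $(M\times\mathrm{id}_Z)\circ M = (\mathrm{id}_X\times\hat\delta)\circ M$ as CPM maps $X\to X\times Z\times Z$ (on the left, the $Z$-output of the first application of $M$ is the last factor), and (self-adjointness) $(\mathrm{id}_X\times\hat e)\circ(M\times\mathrm{id}_Z) = \widehat{P^\dagger}\circ(\mathrm{id}_X\times\mathrm{dec}_Z)$ as CPM maps $X\times Z\to X$. A $Z$-valued demolition measurement on $X$ is a CPM map of the form $\bar M=(\cap_X\times\mathrm{id}_Z)\circ M: X\to Z$ for such an $M$. *)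

(* Finite sets = finTypes, relations = boolean-valued
   two-argument functions, unit type = the monoidal unit 1 = {star}. *)
From HB Require Import structures.
From mathcomp Require Import all_boot.
Set Implicit Arguments. Unset Strict Implicit. Unset Printing Implicit Defensive.

Definition frel (X Y : finType) := X -> Y -> bool.

(* relational composition  S \o R  (first R, then S) *)
Definition rcomp (X Y W : finType) (S : frel Y W) (R : frel X Y) : frel X W :=
  fun x w => [exists y, R x y && S y w].

Definition rconv (X Y : finType) (R : frel X Y) : frel Y X := fun y x => R x y.

Definition rid (X : finType) : frel X X := fun x y => x == y.

Definition cpm (X Y : finType) := frel (X * X)%type (Y * Y)%type.

Definition hatr (X Y : finType) (g : frel X Y) : cpm X Y :=
  fun xx yy => g xx.1 yy.1 && g xx.2 yy.2.

Definition is_cpm (X Y : finType) (R : cpm X Y) : Prop :=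
  exists (E : finType) (h : frel X (E * Y)%type),
    R = fun xx yy => [exists e, h xx.1 (e, yy.1) && h xx.2 (e, yy.2)].

Definition cid (X : finType) : cpm X X := hatr (@rid X).

Definition ctensor (X Y U V : finType) (R : cpm X Y) (S : cpm U V)
  : cpm (X * U)%type (Y * V)%type :=
  fun p q => R (p.1.1, p.2.1) (q.1.1, q.2.1) && S (p.1.2, p.2.2) (q.1.2, q.2.2).

Definition cassoc (X Y W : finType) : cpm ((X * Y) * W)%type (X * (Y * W))%type :=
  hatr (fun p q => q == (p.1.1, (p.1.2, p.2))).
Definition clunit (X : finType) : cpm (unit * X)%type X :=
  hatr (fun p x => p.2 == x).
Definition crunit (X : finType) : cpm (X * unit)%type X :=
  hatr (fun p x => p.1 == x).

Arguments cid X : clear implicits.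
Arguments cassoc X Y W : clear implicits.
Arguments clunit X : clear implicits.
Arguments crunit X : clear implicits.

Definition discard (X : finType) : cpm X unit := fun xx _ => xx.1 == xx.2.

Arguments discard X : clear implicits.

Definition causal (X Y : finType) (R : cpm X Y) : Prop :=
  rcomp (discard Y) R = discard X.

(* An abelian groupoid on Z indexed by L: the group G_l is the fibre of
   gcls over l; each fibre is an abelian group under gadd/gzero/gopp.
   The fibres are pairwise disjoint and cover Z by construction. *)
Record abgroupoid (Z L : finType) := AbGroupoid {
  gcls : Z -> L;
  gadd : Z -> Z -> Z;
  gzero : L -> Z;
  gopp : Z -> Z;
  gzero_cls : forall l, gcls (gzero l) = l;
  gadd_cls : forall x y, gcls x = gcls y -> gcls (gadd x y) = gcls x;
  gopp_cls : forall x, gcls (gopp x) = gcls x;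
  gaddA : forall x y z, gcls x = gcls y -> gcls y = gcls z ->
            gadd x (gadd y z) = gadd (gadd x y) z;
  gaddC : forall x y, gcls x = gcls y -> gadd x y = gadd y x;
  gadd0 : forall x, gadd (gzero (gcls x)) x = x;
  gaddN : forall x, gadd x (gopp x) = gzero (gcls x)
}.

Section Groupoid.
Variables (Z L : finType) (G : abgroupoid Z L).

Definition gsub (x y : Z) := gadd G x (gopp G y).

Definition gdelta : frel Z (Z * Z)%type :=
  fun g p => (gcls G p.1 == gcls G g) && (gcls G p.2 == gcls G g)
             && (gadd G p.1 p.2 == g).

Definition gpair : frel (Z * Z)%type unit :=
  fun p _ => (gcls G p.1 == gcls G p.2) && (gadd G p.1 p.2 == gzero G (gcls G p.1)).

Definition gdec : cpm Z Z :=
  fun xx yy => [&& gcls G xx.2 == gcls G xx.1, gcls G yy.1 == gcls G xx.1,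
                   gcls G yy.2 == gcls G xx.1 &
                   gsub xx.1 yy.1 == gsub xx.2 yy.2].

Definition grhodag (l : L) : cpm Z unit :=
  fun gg _ => (gcls G gg.1 == l) && (gcls G gg.2 == l).
End Groupoid.

Definition nondemolition (Z L : finType) (G : abgroupoid Z L) (X : finType)
  (M : cpm X (X * Z)%type) : Prop :=
  is_cpm M /\ causal M /\
  exists P : frel X (X * Z)%type,
    M = rcomp (ctensor (cid X) (gdec G)) (hatr P) /\
    (* idempotence *)
    rcomp (cassoc X Z Z) (rcomp (ctensor M (cid Z)) M)
      = rcomp (ctensor (cid X) (hatr (gdelta G))) M /\
    (* self-adjointness *)
    rcomp (crunit X) (rcomp (ctensor (cid X) (hatr (gpair G)))
                         (rcomp (cassoc X Z Z) (ctensor M (cid Z))))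
      = rcomp (hatr (rconv P)) (ctensor (cid X) (gdec G)).

Definition demolition (Z L : finType) (G : abgroupoid Z L) (X : finType)
  (Mb : cpm X Z) : Prop :=
  exists M : cpm X (X * Z)%type, nondemolition G M /\
    Mb = rcomp (clunit Z) (rcomp (ctensor (discard X) (cid Z)) M).

(* A non-demolition measurement M is determined by its relation P between
   inputs and (output, outcome) pairs.  Causality makes P total,
   self-adjointness makes "x can be sent to y" symmetric and idempotence makes
   it transitive, so it is an equivalence relation on X; moreover all the
   outcomes produced from one class lie in a single group G_l.  Every
   partition of a finite set underlies an abelian groupoid (make each block a
   cyclic group), and f sends a block to the index l of its outcomes.  Both
   sides of the identity then say that x and x' lie in one block, whose
   outcomes lie in G_l. *)

From Pilot Require Import Defs.
From HB Require Import structures.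
From mathcomp Require Import all_boot.
From Stdlib Require Import FunctionalExtensionality.
Set Implicit Arguments. Unset Strict Implicit. Unset Printing Implicit Defensive.

Section GroupoidFacts.
Variables (Z L : finType) (G : abgroupoid Z L).

Lemma gdec_cls w w' z z' : gdec G (w, w') (z, z') ->
  [/\ gcls G w' = gcls G w, gcls G z = gcls G w & gcls G z' = gcls G w].
Proof. by case/and4P => /= /eqP -> /eqP -> /eqP ->. Qed.

Lemma gdec_diag w w' : gcls G w = gcls G w' -> gdec G (w, w') (w, w').
Proof. by move=> eq_ww'; rewrite /gdec /gsub /= eq_ww' !gaddN eq_ww' !eqxx. Qed.

Lemma grhodag_gdecE l x x' u :
  rcomp (grhodag G l) (gdec G) (x, x') u = (gcls G x == l) && (gcls G x' == l).
Proof.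
apply/existsP/andP => [[[y y']] | [/eqP xl /eqP x'l]].
  by case/andP=> /gdec_cls[-> cy _] /andP[/=]; rewrite cy => ->.
by exists (x, x'); rewrite /grhodag /= xl x'l !eqxx !andbT gdec_diag // xl x'l.
Qed.

End GroupoidFacts.

Section FibreGroupoid.
Variables (X Gam : finType) (c : X -> Gam) (s : Gam -> X).
Hypothesis sK : cancel s c.

Definition fibre g := enum [pred y | c y == g].
Definition fibre_index x := index x (fibre (c x)).
Definition fibre_nth g k (d : X) := nth d (fibre g) (k %% size (fibre g)).

Lemma mem_fibre g y : (y \in fibre g) = (c y == g).
Proof. by rewrite mem_enum inE. Qed.

Lemma fibre_size_gt0 x : 0 < size (fibre (c x)).
Proof. by have := mem_fibre (c x) x; rewrite eqxx; case: (fibre _). Qed.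

Lemma fibre_index_lt x : fibre_index x < size (fibre (c x)).
Proof. by rewrite index_mem mem_fibre. Qed.

Lemma fibre_nth_cls x k d : c (fibre_nth (c x) k d) = c x.
Proof. by apply/eqP; rewrite -mem_fibre mem_nth // ltn_pmod ?fibre_size_gt0. Qed.

Lemma fibre_indexK x d : fibre_nth (c x) (fibre_index x) d = x.
Proof.
rewrite /fibre_nth modn_small ?fibre_index_lt //.
by rewrite (set_nth_default x) ?fibre_index_lt // nth_index // mem_fibre.
Qed.

Lemma fibre_nthK x k d : fibre_index (fibre_nth (c x) k d) = k %% size (fibre (c x)).
Proof.
rewrite /fibre_index fibre_nth_cls index_uniq ?enum_uniq //.
by rewrite ltn_pmod ?fibre_size_gt0.
Qed.

Lemma fibre_nth_mod x k k' d d' :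
  k = k' %[mod size (fibre (c x))] -> fibre_nth (c x) k d = fibre_nth (c x) k' d'.
Proof.
by move=> eq_kk'; rewrite /fibre_nth eq_kk'; apply: set_nth_default;
  rewrite ltn_pmod ?fibre_size_gt0.
Qed.

(* Each fibre of [c] is given the group structure of Z/nZ transported along
   its enumeration. *)
Definition fibre_add x y := fibre_nth (c x) (fibre_index x + fibre_index y) x.
Definition fibre_zero g := fibre_nth g 0 (s g).
Definition fibre_opp x := fibre_nth (c x) (size (fibre (c x)) - fibre_index x) x.

Definition fibre_abgroupoid : abgroupoid X Gam.
Proof.
refine (@AbGroupoid X Gam c fibre_add fibre_zero fibre_opp _ _ _ _ _ _ _).
- by move=> g; rewrite /fibre_zero -{1 2}(sK g) fibre_nth_cls.
- by move=> x y _; apply: fibre_nth_cls.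
- by move=> x; apply: fibre_nth_cls.
- move=> x y z cxy cyz; rewrite /fibre_add !fibre_nth_cls; apply: fibre_nth_mod.
  by rewrite !fibre_nthK cxy modnDmr modnDml addnA.
- by move=> x y cxy; rewrite /fibre_add cxy; apply: fibre_nth_mod; rewrite addnC.
- by move=> x; rewrite /fibre_add /fibre_zero fibre_nth_cls fibre_nthK mod0n add0n fibre_indexK.
- move=> x; rewrite /fibre_add /fibre_opp /fibre_zero fibre_nthK.
  apply: fibre_nth_mod; rewrite modnDmr subnKC ?modnn ?mod0n //.
  exact: ltnW (fibre_index_lt x).
Defined.

End FibreGroupoid.

Section EquivalenceClasses.
Variables (X : finType) (e : rel X).
Hypotheses (e_refl : reflexive e) (e_sym : symmetric e) (e_trans : transitive e).

Definition class_rep x := odflt x [pick y | e x y].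

Lemma class_repP x : e x (class_rep x).
Proof. by rewrite /class_rep; case: pickP => //= /(_ x); rewrite e_refl. Qed.

Lemma eq_class_rep x y : (class_rep x == class_rep y) = e x y.
Proof.
apply/eqP/idP => [eq_xy | e_xy].
  by apply: e_trans (class_repP x) _; rewrite eq_xy e_sym class_repP.
rewrite /class_rep (@eq_pick _ (e x) (e y)) => [|z].
  by case: pickP => // /(_ y); rewrite e_refl.
by apply/idP/idP; apply: e_trans; rewrite // e_sym.
Qed.

Lemma class_rep_idem x : class_rep (class_rep x) == class_rep x.
Proof. by rewrite eq_class_rep e_sym class_repP. Qed.

Definition class_type := {x : X | class_rep x == x}.
Definition class_of x : class_type := exist _ (class_rep x) (class_rep_idem x).

Lemma class_ofK : cancel val class_of.
Proof. by case=> x rx; apply: val_inj; apply/eqP. Qed.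

Lemma eq_class_of x y : (class_of x == class_of y) = e x y.
Proof. exact: eq_class_rep. Qed.

Lemma equivalence_abgroupoid : exists (Gam : finType) (H : abgroupoid X Gam) (s : Gam -> X),
  cancel s (gcls H) /\ forall x y, (gcls H x == gcls H y) = e x y.
Proof.
exists class_type, (fibre_abgroupoid class_ofK), val.
split; [exact: class_ofK | exact: eq_class_of].
Qed.

End EquivalenceClasses.

Lemma discard_fstE (A X Z : finType) (N : cpm A (X * Z)%type) a a' z z' :
  rcomp (clunit Z) (rcomp (ctensor (discard X) (cid Z)) N) (a, a') (z, z')
  = [exists y, N (a, a') ((y, z), (y, z'))].
Proof.
apply/existsP/existsP => [[[[t z1] [t' z1']]] | [y Ny]].
  case/andP=> /existsP[[[y1 w1] [y1' w1']]] /andP[Ny ct] cl.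
  rewrite /ctensor /discard /cid /clunit /hatr /rid /= in ct cl.
  case/and3P: ct => /eqP ey /eqP ew /eqP ew'; case/andP: cl => /eqP ez /eqP ez'.
  by exists y1; rewrite -ez -ez' -ew -ew' {2}ey.
exists ((tt, z), (tt, z')); rewrite /clunit /hatr /= !eqxx !andbT.
by apply/existsP; exists ((y, z), (y, z')); rewrite Ny /ctensor /discard /cid /hatr /rid /= !eqxx.
Qed.

Section Measurement.
Variables (Z L : finType) (G : abgroupoid Z L) (X : finType).
Variables (P : Defs.frel X (X * Z)%type) (M : cpm X (X * Z)%type).
Hypothesis M_def : M = rcomp (ctensor (cid X) (gdec G)) (hatr P).

Lemma measE x x' y y' z z' : M (x, x') ((y, z), (y', z')) =
  [exists w, exists w', [&& P x (y, w), P x' (y', w') & gdec G (w, w') (z, z')]].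
Proof.
rewrite M_def; apply/existsP/existsP => [[[[a w] [a' w']]] | [w /existsP[w' /and3P[Pw Pw' dec]]]].
  case/andP=> /andP[Pw Pw'] /andP[/andP[/eqP/= ay /eqP/= ay'] dec].
  by exists w; apply/existsP; exists w'; rewrite -ay -ay' Pw Pw'.
by exists ((y, w), (y', w')); rewrite /ctensor /cid /hatr /rid /= Pw Pw' dec !eqxx.
Qed.

Lemma meas_diag x y w : P x (y, w) -> M (x, x) ((y, w), (y, w)).
Proof.
by move=> Pw; rewrite measE; apply/existsP; exists w; apply/existsP; exists w;
  rewrite Pw gdec_diag.
Qed.

Hypothesis M_causal : causal M.

Lemma meas_total x : exists yw, P x yw.
Proof.
have : rcomp (discard _) M (x, x) (tt, tt) by rewrite M_causal /discard eqxx.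
case/existsP=> [[[y z] yz']] /andP[Mx /eqP/= eq_yz]; move: Mx; rewrite -eq_yz.
by rewrite measE => /existsP[w /existsP[w' /and3P[Pw _ _]]]; exists (y, w).
Qed.

Hypothesis M_adjoint :
  rcomp (crunit X) (rcomp (ctensor (cid X) (hatr (gpair G)))
                     (rcomp (cassoc X Z Z) (ctensor M (cid Z))))
  = rcomp (hatr (rconv P)) (ctensor (cid X) (gdec G)).

(* Evaluate both sides at [(x, w)] -> [y]: the left side holds through the
   outcome [- w] of [M], which the pairing matches with [w]. *)
Lemma meas_sym x y w : P x (y, w) -> exists2 u, gcls G u = gcls G w & P y (x, u).
Proof.
move=> Pw; set xw := (x, w); have := f_equal (fun F => F (xw, xw) (y, y)) M_adjoint.
have -> /= : rcomp (crunit X) (rcomp (ctensor (cid X) (hatr (gpair G)))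
   (rcomp (cassoc X Z Z) (ctensor M (cid Z)))) (xw, xw) (y, y).
  apply/existsP; exists ((y, tt), (y, tt)); apply/andP; split; last first.
    by rewrite /crunit /hatr /= eqxx.
  set nw := (y, (gopp G w, w)); apply/existsP; exists (nw, nw); apply/andP; split; last first.
    rewrite /ctensor /cid /hatr /rid /gpair /= eqxx gopp_cls eqxx.
    by rewrite gaddC ?gopp_cls // gaddN eqxx.
  apply/existsP; exists (((y, gopp G w), w), ((y, gopp G w), w)); apply/andP; split; last first.
    by rewrite /cassoc /hatr /= eqxx.
  rewrite /ctensor /cid /hatr /rid /= !eqxx !andbT measE.
  by apply/existsP; exists w; apply/existsP; exists w; rewrite Pw /gdec /= gopp_cls !eqxx.
case/esym/existsP=> [[[a u] [a' u']]].
rewrite /ctensor /cid /hatr /rid /rconv /= => /andP[/andP[/andP[/eqP <- _] /gdec_cls[_ uw _]]].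
by case/andP=> Pu _; exists u.
Qed.

Hypothesis M_idem :
  rcomp (cassoc X Z Z) (rcomp (ctensor M (cid Z)) M)
  = rcomp (ctensor (cid X) (hatr (gdelta G))) M.

(* Measuring twice along [x -> y -> y2] is one measurement whose outcome
   splits as [(w2, w)]. *)
Lemma meas_comp x y w y2 w2 : P x (y, w) -> P y (y2, w2) ->
  gcls G w2 = gcls G w /\ exists u, P x (y2, u).
Proof.
move=> Pw Pw2; set out := (y2, (w2, w)).
have := f_equal (fun F => F (x, x) (out, out)) M_idem.
have -> /= : rcomp (cassoc X Z Z) (rcomp (ctensor M (cid Z)) M) (x, x) (out, out).
  apply/existsP; exists (((y2, w2), w), ((y2, w2), w)); apply/andP; split; last first.
    by rewrite /cassoc /hatr /= eqxx.
  apply/existsP; exists ((y, w), (y, w)).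
  by rewrite meas_diag // /ctensor /cid /hatr /rid /= meas_diag // !eqxx.
case/esym/existsP=> [[[a s] [a' s']]].
rewrite /ctensor /cid /hatr /rid /gdelta /=.
case/and5P=> Ma /andP[/eqP ay2 _] /andP[/andP[/eqP c2 /eqP c1] _] _ _.
move: Ma; rewrite ay2 measE => /existsP[u /existsP[_ /and3P[Pu _ _]]].
by split; [rewrite c2 c1 | exists u].
Qed.

Definition meas_rel x y := [exists w, P x (y, w)].

Lemma meas_rel_sym : symmetric meas_rel.
Proof.
apply: symmetric_from_pre => x y /existsP[w /meas_sym[u _ Pu]].
by apply/existsP; exists u.
Qed.

Lemma meas_rel_trans : transitive meas_rel.
Proof.
move=> y x z /existsP[w Pw] /existsP[w2 Pw2].
by have [_ [u Pu]] := meas_comp Pw Pw2; apply/existsP; exists u.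
Qed.

Lemma meas_rel_refl : reflexive meas_rel.
Proof.
move=> x; have [[y w] Pw] := meas_total x.
have xy : meas_rel x y by apply/existsP; exists w.
by apply: (meas_rel_trans xy); rewrite meas_rel_sym.
Qed.

Lemma meas_cls_uniq x y y' w w' : P x (y, w) -> P x (y', w') -> gcls G w = gcls G w'.
Proof.
move=> /meas_sym[u <- Pu] Pw'.
by have [-> _] := meas_comp Pu Pw'.
Qed.

Definition meas_label x := gcls G (xchoose (meas_total x)).2.

Lemma meas_labelP x y w : P x (y, w) -> gcls G w = meas_label x.
Proof.
rewrite /meas_label; case: (xchoose _) (xchooseP (meas_total x)) => y' w' Pw' Pw.
exact: meas_cls_uniq Pw Pw'.
Qed.

Lemma meas_label_rel x x' : meas_rel x x' -> meas_label x = meas_label x'.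
Proof.
case/existsP=> w Pw; rewrite -(meas_labelP Pw) /meas_label.
case: (xchoose _) (xchooseP (meas_total x')) => y w' Pw' /=.
by have [-> _] := meas_comp Pw Pw'.
Qed.

Lemma rho_demolitionE l x x' u :
  rcomp (grhodag G l) (rcomp (clunit Z) (rcomp (ctensor (discard X) (cid Z)) M)) (x, x') u
  = meas_rel x x' && (meas_label x == l).
Proof.
apply/existsP/andP => [[[z z']] | [xx' /eqP xl]].
  case/andP; rewrite discard_fstE => /existsP[y]; rewrite measE.
  case/existsP=> w /existsP[w' /and3P[Pw Pw' /gdec_cls[_ zw _]]] /andP[/= /eqP zl _].
  have xy : meas_rel x y by apply/existsP; exists w.
  have x'y : meas_rel x' y by apply/existsP; exists w'.
  split; first by apply: (meas_rel_trans xy); rewrite meas_rel_sym.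
  by rewrite -(meas_labelP Pw) -zw zl.
have [[y w'] Pw'] := meas_total x'.
have /existsP[w Pw] : meas_rel x y by apply: (meas_rel_trans xx'); apply/existsP; exists w'.
have wl : gcls G w = l by rewrite (meas_labelP Pw).
have w'l : gcls G w' = l by rewrite (meas_labelP Pw') -(meas_label_rel xx').
exists (w, w'); rewrite /grhodag /= wl w'l eqxx discard_fstE !andbT.
apply/existsP; exists y; rewrite measE; apply/existsP; exists w; apply/existsP; exists w'.
by rewrite Pw Pw' gdec_diag // wl w'l.
Qed.

End Measurement.

Theorem mainTheorem5 (Z L : finType) (G : abgroupoid Z L) (X : finType)
  (Mb : cpm X Z) :
  demolition G Mb ->
  exists (Gam : finType) (H : abgroupoid X Gam) (f : Gam -> L),
    forall l : L,
      rcomp (grhodag G l) Mb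
      = (fun xx u => [exists g : Gam,
                        (f g == l) && rcomp (grhodag H g) (gdec H) xx u]).
Proof.
case=> M [[_ [M_causal [P [M_def [M_idem M_adjoint]]]]] ->].
have [Gam [H [s [sK eq_gcls]]]] := equivalence_abgroupoid
  (meas_rel_refl M_def M_causal M_adjoint M_idem)
  (meas_rel_sym M_def M_adjoint) (meas_rel_trans M_def M_idem).
set label := meas_label M_def M_causal.
have label_s x : label (s (gcls H x)) = label x.
  by apply: (meas_label_rel M_def M_causal M_adjoint M_idem); rewrite -eq_gcls sK.
exists Gam, H, (label \o s) => l.
apply: functional_extensionality => -[x x']; apply: functional_extensionality => u.
rewrite (rho_demolitionE M_def M_causal M_adjoint M_idem) -eq_gcls -/label.
apply/andP/existsP => [[xx' xl] | [g /andP[gl]]].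
  by exists (gcls H x); rewrite grhodag_gdecE -(eqP xx') /= label_s xl eqxx.
rewrite grhodag_gdecE => /andP[/eqP xg /eqP x'g].
by rewrite xg x'g -label_s xg.
Qed.
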